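(* Let $X$ be a measure space, let $\Phi_1,\Phi_2,\Phi_3$ be Young functions and $u_1,u_2,u_3:X\to(0,\infty)$ weights such that $\Phi_1^{-1}(t)\Phi_2^{-1}(t)\le\Phi_3^{-1}(t)$ for every $t>0$ and $u_3(x)\le u_1(x)u_2(x)$ for every $x\in X$. If $f_1\in wL_{\Phi_1}^{u_1}(X)$ and $f_2\in wL_{\Phi_2}^{u_2}(X)$, then $f_1f_2\in wL_{\Phi_3}^{u_3}(X)$ and $$\|f_1f_2\|_{wL_{\Phi_3}^{u_3}(X)}\le 2\|f_1\|_{wL_{\Phi_1}^{u_1}(X)}\|f_2\|_{wL_{\Phi_2}^{u_2}(X)}.$$
   Context: A Young function is a function $\Phi:[0,\infty)\to[0,\infty)$ that is convex, left-continuous, satisfies $\lim_{t\to0}\Phi(t)=0=\Phi(0)$ and $\lim_{t\to\infty}\Phi(t)=\infty$. Its generalized inverse is $\Phi^{-1}(s):=\inf\{r\ge0:\Phi(r)>s\}$. For a Young function $\Phi$ and a weight $u:X\to(0,\infty)$, the weighted weak Orlicz space $wL_\Phi^u(X)$ is the set of measurable $f:X\to\mathbb{R}$ with $\|f\|_{wL_\Phi^u(X)} := \inf\{ b>0 : \sup_{t>0} \Phi(t)\,|\{x\in X : |u(x)f(x)|/b > t\}| \le 1\} < \infty$, where $|\cdot|$ denotes the measure on $X$. *)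

From HB Require Import structures.
From mathcomp Require Import all_boot all_order all_algebra.
From mathcomp Require Import all_classical all_reals all_analysis.
Set Implicit Arguments. Unset Strict Implicit. Unset Printing Implicit Defensive.
Import Order.TTheory GRing.Theory Num.Theory.
Import numFieldNormedType.Exports.
Local Open Scope classical_set_scope.
Local Open Scope ring_scope.

Section young.
Context {R : realType}.

(* A Young function Phi : [0,oo) -> [0,oo); values of Phi on negative
   arguments are irrelevant and unconstrained. *)
Definition young (Phi : R -> R) : Prop :=
  [/\ (forall t, 0 <= t -> 0 <= Phi t),
      (forall x y l, 0 <= x -> 0 <= y -> 0 <= l -> l <= 1 ->
         Phi (l * x + (1 - l) * y) <= l * Phi x + (1 - l) * Phi y),
      (forall t, 0 < t -> Phi x @[x --> t^'-] --> Phi t),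
      Phi 0 = 0 /\ Phi x @[x --> 0^'+] --> 0 &
      Phi x @[x --> +oo] --> +oo].

Definition young_inv (Phi : R -> R) (s : R) : R :=
  inf [set r : R | 0 <= r /\ s < Phi r].
End young.

Section weak_orlicz.
Context {d : measure_display} {T : measurableType d} {R : realType}.
Variable mu : {measure set T -> \bar R}.

Definition wL_admissible (Phi : R -> R) (u f : T -> R) : set R :=
  [set b : R | 0 < b /\
     forall t : R, 0 < t ->
       ((Phi t)%:E * mu [set x | (t < `|u x * f x| / b)%R] <= 1)%E].

(* ||f||_{wL_Phi^u(X)} as an extended real (inf of the empty set is +oo) *)
Definition wL_norm (Phi : R -> R) (u f : T -> R) : \bar R :=
  ereal_inf [set b%:E | b in wL_admissible Phi u f].

Definition in_wL (Phi : R -> R) (u f : T -> R) : Prop :=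
  measurable_fun setT f /\ (wL_norm Phi u f < +oo)%E.
End weak_orlicz.

From HB Require Import structures.
From mathcomp Require Import all_boot all_order all_algebra.
From mathcomp Require Import all_classical all_reals all_analysis.
From mathcomp Require Import measurable_realfun ring lra.
Set Implicit Arguments. Unset Strict Implicit. Unset Printing Implicit Defensive.
Import Order.TTheory GRing.Theory Num.Theory.
Local Open Scope classical_set_scope.
Local Open Scope ring_scope.

(** If [b1], [b2] are admissible for [f1], [f2], then [2 b1 b2] is admissible
   for [f1 f2]. Take [s < Phi3 (2 t)]: then [Phi3^-1 s < 2 t], so
   [Phi1^-1 s * Phi2^-1 s < 2 t] and [2 t] factors as [t1 t2] with
   [Phi1^-1 s < t1] and [Phi2^-1 s < t2], i.e. [s < Phi1 t1] and [s < Phi2 t2].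
   The level set of [f1 f2] at height [t] is contained in the union of the
   level sets of [f1] at [t1] and of [f2] at [t2], whence
   [s mu(level set) <= 2]. Letting [s] tend to [Phi3 (2 t)] and using
   [Phi3 t <= Phi3 (2 t) / 2] (convexity) gives admissibility; taking the
   infimum over [b1] and [b2] gives the norm inequality. *)

Section young_function.
Variables (R : realType) (Phi : R -> R).
Hypothesis youngPhi : young Phi.

Lemma young_ge0 t : 0 <= t -> 0 <= Phi t.
Proof. by move: youngPhi => [+ _ _ _ _]; apply. Qed.

Lemma young_scale_le l x : 0 <= l <= 1 -> 0 <= x -> Phi (l * x) <= l * Phi x.
Proof.
move: youngPhi => [_ convex _ [Phi0 _] _] /andP[l_ge0 l_le1] x_ge0.
have := convex x 0 l x_ge0 (lexx 0) l_ge0 l_le1.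
by rewrite mulr0 addr0 Phi0 mulr0 addr0.
Qed.

Lemma young_le x y : 0 <= x -> x <= y -> Phi x <= Phi y.
Proof.
move=> x_ge0 le_xy; have y_ge0 := le_trans x_ge0 le_xy.
have [y0|y_neq0] := eqVneq y 0.
  by have -> : x = y by apply/eqP; rewrite eq_le le_xy y0 x_ge0.
have y_gt0 : 0 < y by rewrite lt_def y_neq0 y_ge0.
have xy01 : 0 <= x / y <= 1 by rewrite divr_ge0 //= ler_pdivrMr // mul1r.
have := young_scale_le xy01 y_ge0; rewrite divfK // => /le_trans; apply.
by rewrite ler_piMl // ?young_ge0 //; case/andP: xy01.
Qed.

Lemma young_le_half_double t : 0 <= t -> Phi t <= Phi (2 * t) / 2.
Proof.
move=> t_ge0; rewrite mulrC.
have half01 : 0 <= (2^-1 : R) <= 1 by rewrite invr_ge0 ler0n /= invf_le1 ?ler1n.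
by have := young_scale_le half01 (mulr_ge0 (ler0n _ 2) t_ge0); rewrite mulKf.
Qed.

Lemma young_unbounded s : exists2 r, 0 <= r & s < Phi r.
Proof.
move: youngPhi => [_ _ _ _ /cvgryPge /(_ (s + 1)) Phi_ge].
have : \forall r \near +oo, 0 <= r /\ s + 1 <= Phi r.
  by near=> r; split; near: r; [exact: nbhs_pinfty_ge | exact: Phi_ge].
case/filter_ex => r [r_ge0 Phi_r]; exists r => //.
by apply: lt_le_trans Phi_r; rewrite ltrDl.
Unshelve. all: by end_near.
Qed.

Lemma young_inv_ge0 s : 0 <= young_inv Phi s.
Proof.
apply: lb_le_inf => [|r []//].
by have [r r_ge0 s_lt] := young_unbounded s; exists r.
Qed.

(* The generalized inverse and [Phi] form a Galois connection; the direction
   from right to left is where left continuity of [Phi] is needed. *)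
Lemma young_inv_lt s t : 0 < t -> young_inv Phi s < t <-> s < Phi t.
Proof.
move=> t_gt0; split.
  case/inf_lt => [|r [r_ge0 s_lt] /ltW le_rt].
    by have [r r_ge0 s_lt] := young_unbounded s; exists r.
  by apply: lt_le_trans s_lt (young_le r_ge0 le_rt).
move: youngPhi => [_ _ left_cont _ _] s_lt.
have Phi_gt := cvgr_gt _ (left_cont t t_gt0) _ s_lt.
have : \forall r \near t^'-, [/\ 0 < r, r < t & s < Phi r].
  by near=> r; split; near: r; [exact: nbhs_left_gt|exact: nbhs_left_lt|exact: Phi_gt].
case/filter_ex => r [r_gt0 lt_rt s_lt_r].
apply: le_lt_trans lt_rt; apply: ge_inf; last by split=> //; exact: ltW.
by exists 0 => x [].
Unshelve. all: by end_near.
Qed.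

End young_function.

Lemma exists_gt_factors (R : realFieldType) (a1 a2 c : R) :
  0 <= a1 -> 0 <= a2 -> a1 * a2 < c ->
  exists t1 t2, [/\ a1 < t1, a2 < t2 & t1 * t2 = c].
Proof.
move=> a1_ge0 a2_ge0 lt_c.
have a2S_gt0 : 0 < a2 + 1 by rewrite ltr_wpDl.
pose e := (c - a1 * a2) / (a2 + 1).
have e_gt0 : 0 < e by rewrite divr_gt0 // subr_gt0.
have eE : e * (a2 + 1) = c - a1 * a2 by rewrite divfK // gt_eqF.
have t1_gt0 : 0 < a1 + e by rewrite ltr_wpDl.
exists (a1 + e), (c / (a1 + e)); split; first by rewrite ltrDl.
  by rewrite ltr_pdivlMr //; nra.
by rewrite mulrC divfK // gt_eqF.
Qed.

Lemma ler_mul_inf (R : realType) (S : set R) (a x : R) :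
  0 <= a -> S !=set0 -> (forall c, S c -> x <= a * c) -> x <= a * inf S.
Proof.
move=> a_ge0 S_neq0 x_le; have [a0|a_neq0] := eqVneq a 0.
  by have [c Sc] := S_neq0; have := x_le c Sc; rewrite a0 !mul0r.
have a_gt0 : 0 < a by rewrite lt_def a_neq0 a_ge0.
rewrite mulrC -ler_pdivrMr //; apply: lb_le_inf => // c Sc.
by rewrite ler_pdivrMr // mulrC; exact: x_le.
Qed.

Lemma normr_weighted_mul_le (R : realDomainType) (w1 w2 w3 y1 y2 : R) :
  0 <= w3 -> w3 <= w1 * w2 ->
  `|w3 * (y1 * y2)| <= `|w1 * y1| * `|w2 * y2|.
Proof.
move=> w3_ge0 w3_le; rewrite -normrM mulrACA [X in _ <= X]normrM normrM.
rewrite (ger0_norm w3_ge0) ler_wpM2r //.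
exact: le_trans w3_le (ler_norm _).
Qed.

Section weak_orlicz_norm.
Context {d : measure_display} {T : measurableType d} {R : realType}.
Variable mu : {measure set T -> \bar R}.
Implicit Types (Phi : R -> R) (u f : T -> R).

Definition wL_level_set u f (b t : R) := [set x | t < `|u x * f x| / b].

Lemma measurable_wL_level_set u f b t :
  measurable_fun setT u -> measurable_fun setT f ->
  measurable (wL_level_set u f b t).
Proof.
move=> mw mf.
have mg : measurable_fun setT (fun x => `|u x * f x| / b).
  apply: (@measurable_funM _ _ _ _ (fun x => `|u x * f x|) (cst b^-1)) => //.
  exact: (measurableT_comp (@normr_measurable R setT) (measurable_funM mw mf)).
have := mg measurableT _ (measurable_itv `]t, +oo[).
by rewrite setTI preimage_itvoy.
Qed.

Lemma wL_admissible_lbound0 Phi u f : lbound (wL_admissible mu Phi u f) 0.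
Proof. by move=> b [/ltW]. Qed.

Lemma wL_normE Phi u f : wL_admissible mu Phi u f !=set0 ->
  wL_norm mu Phi u f = (inf (wL_admissible mu Phi u f))%:E.
Proof.
by apply: ereal_inf_EFin; exists 0; exact: wL_admissible_lbound0.
Qed.

Lemma wL_norm_lt_pinftyP Phi u f :
  (wL_norm mu Phi u f < +oo)%E <-> wL_admissible mu Phi u f !=set0.
Proof.
split=> [/ereal_inf_lt[_ [b adm_b _]] _|adm_neq0]; first by exists b.
by rewrite wL_normE // ltry.
Qed.

End weak_orlicz_norm.

Section wL_admissible_mul.
Context {d : measure_display} {T : measurableType d} {R : realType}.
Variable mu : {measure set T -> \bar R}.
Variables (Phi1 Phi2 Phi3 : R -> R) (u1 u2 u3 f1 f2 : T -> R).
Hypotheses (young1 : young Phi1) (young2 : young Phi2) (young3 : young Phi3).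
Hypotheses (mw1 : measurable_fun setT u1) (mw2 : measurable_fun setT u2).
Hypotheses (mw3 : measurable_fun setT u3).
Hypotheses (mf1 : measurable_fun setT f1) (mf2 : measurable_fun setT f2).
Hypothesis u3_ge0 : forall x, 0 <= u3 x.
Hypothesis u3_le : forall x, u3 x <= u1 x * u2 x.
Hypothesis young_inv_mul :
  forall t, 0 < t -> young_inv Phi1 t * young_inv Phi2 t <= young_inv Phi3 t.

Let f12 x := f1 x * f2 x.

Lemma wL_level_set_mul_subset k b1 b2 t t1 t2 :
  0 < k -> 0 < b1 -> 0 < b2 -> t1 * t2 = k * t ->
  wL_level_set u3 f12 (k * b1 * b2) t `<=`
  wL_level_set u1 f1 b1 t1 `|` wL_level_set u2 f2 b2 t2.
Proof.
move=> k_gt0 b1_gt0 b2_gt0 t12E x.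
rewrite /wL_level_set /f12 /= ltr_pdivlMr ?mulr_gt0 // => lt_t.
have [|le1] := ltP t1 (`|u1 x * f1 x| / b1); first by left.
have [|le2] := ltP t2 (`|u2 x * f2 x| / b2); first by right.
rewrite ler_pdivrMr // in le1; rewrite ler_pdivrMr // in le2.
have := normr_weighted_mul_le (f1 x) (f2 x) (u3_ge0 x) (u3_le x).
move/le_trans/(_ (ler_pM (normr_ge0 _) (normr_ge0 _) le1 le2)).
have -> : t1 * b1 * (t2 * b2) = t * (k * b1 * b2) by rewrite mulrACA t12E; ring.
by rewrite leNgt lt_t.
Qed.

Lemma wL_level_set_mul_le b1 b2 t s :
  wL_admissible mu Phi1 u1 f1 b1 -> wL_admissible mu Phi2 u2 f2 b2 ->
  0 < t -> s < Phi3 (2 * t) ->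
  (s%:E * mu (wL_level_set u3 f12 (2 * b1 * b2) t) <= 2%:E)%E.
Proof.
move=> [b1_gt0 adm1] [b2_gt0 adm2] t_gt0 s_lt.
have [s_le0|s_gt0] := lerP s 0.
  by apply: le_trans (mule_le0_ge0 _ (measure_ge0 _ _)) _; rewrite lee_fin.
have inv3 : young_inv Phi3 s < 2 * t by apply/young_inv_lt; rewrite ?mulr_gt0.
have [t1 [t2 [inv1 inv2 t12E]]] := exists_gt_factors (young_inv_ge0 young1 s)
  (young_inv_ge0 young2 s) (le_lt_trans (young_inv_mul s_gt0) inv3).
have t1_gt0 := le_lt_trans (young_inv_ge0 young1 s) inv1.
have t2_gt0 := le_lt_trans (young_inv_ge0 young2 s) inv2.
have /(young_inv_lt young1 _ t1_gt0) s_lt1 := inv1.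
have /(young_inv_lt young2 _ t2_gt0) s_lt2 := inv2.
have mB1 := measurable_wL_level_set b1 t1 mw1 mf1.
have mB2 := measurable_wL_level_set b2 t2 mw2 mf2.
have mA := measurable_wL_level_set (2 * b1 * b2) t mw3 (measurable_funM mf1 mf2).
have sub := wL_level_set_mul_subset (ltr0n _ 2) b1_gt0 b2_gt0 t12E.
have s_ge0 : (0 <= s%:E)%E by rewrite lee_fin ltW.
apply: le_trans (lee_wpmul2l s_ge0 (le_measure _ _ _ sub)) _;
  rewrite ?inE //; first exact: measurableU.
apply: le_trans (lee_wpmul2l s_ge0 (measureU2 mu mB1 mB2)) _.
rewrite ge0_muleDr // -[2%:E]/((1 + 1)%:E) EFinD.
apply: leeD.
- apply: le_trans (adm1 t1 t1_gt0); apply: lee_wpmul2r => //.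
  by rewrite lee_fin ltW.
- apply: le_trans (adm2 t2 t2_gt0); apply: lee_wpmul2r => //.
  by rewrite lee_fin ltW.
Qed.

Lemma wL_admissible_mul b1 b2 :
  wL_admissible mu Phi1 u1 f1 b1 -> wL_admissible mu Phi2 u2 f2 b2 ->
  wL_admissible mu Phi3 u3 f12 (2 * b1 * b2).
Proof.
move=> adm1 adm2; have [b1_gt0 _] := adm1; have [b2_gt0 _] := adm2.
split=> [|t t_gt0]; first by rewrite !mulr_gt0.
set A := [set x | _]; change A with (wL_level_set u3 f12 (2 * b1 * b2) t).
have mA_ge0 := measure_ge0 mu A.
have Phi3_ge0 : 0 <= Phi3 (2 * t) by rewrite young_ge0 // mulr_ge0 // ltW.
(* letting [s] tend to [Phi3 (2 t)] from below, through [s = r Phi3 (2 t)] *)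
have double_le : ((Phi3 (2 * t))%:E * mu A <= 2%:E)%E.
  apply/lee_mul01Pr => [|r /andP[r_gt0 r_lt1]]; first exact: mule_ge0.
  have [->|Phi3_neq0] := eqVneq (Phi3 (2 * t)) 0.
    by rewrite mul0e mule0 lee_fin.
  rewrite muleA -EFinM; apply: wL_level_set_mul_le => //.
  by rewrite gtr_pMl // lt_def Phi3_neq0.
apply: (@le_trans _ _ ((Phi3 (2 * t) / 2)%:E * mu A)%E).
  by apply: lee_wpmul2r => //; rewrite lee_fin young_le_half_double // ltW.
rewrite mulrC EFinM -muleA.
apply: le_trans (lee_wpmul2l _ double_le) _; first by rewrite lee_fin invr_ge0.
by rewrite -EFinM mulVf.
Qed.

End wL_admissible_mul.

Theorem theorem3p1 (d : measure_display) (T : measurableType d) (R : realType)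
  (mu : {measure set T -> \bar R})
  (Phi1 Phi2 Phi3 : R -> R) (u1 u2 u3 : T -> R) (f1 f2 : T -> R) :
  young Phi1 -> young Phi2 -> young Phi3 ->
  (forall x, 0 < u1 x) -> (forall x, 0 < u2 x) -> (forall x, 0 < u3 x) ->
  measurable_fun setT u1 -> measurable_fun setT u2 -> measurable_fun setT u3 ->
  (forall t, 0 < t -> young_inv Phi1 t * young_inv Phi2 t <= young_inv Phi3 t) ->
  (forall x, u3 x <= u1 x * u2 x) ->
  in_wL mu Phi1 u1 f1 -> in_wL mu Phi2 u2 f2 ->
  in_wL mu Phi3 u3 (fun x => f1 x * f2 x)%R /\
  (wL_norm mu Phi3 u3 (fun x => f1 x * f2 x)%R
     <= 2%:E * wL_norm mu Phi1 u1 f1 * wL_norm mu Phi2 u2 f2)%E.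
Proof.
move=> young1 young2 young3 _ _ u3_gt0 mw1 mw2 mw3 inv_mul u3_le.
move=> [mf1 /wL_norm_lt_pinftyP adm1] [mf2 /wL_norm_lt_pinftyP adm2].
have adm3 c1 c2 : wL_admissible mu Phi1 u1 f1 c1 ->
    wL_admissible mu Phi2 u2 f2 c2 ->
    wL_admissible mu Phi3 u3 (fun x => f1 x * f2 x) (2 * c1 * c2).
  by apply: wL_admissible_mul => // x; exact: ltW.
have adm3_neq0 : wL_admissible mu Phi3 u3 (fun x => f1 x * f2 x) !=set0.
  have [[c1 adm_c1] [c2 adm_c2]] := (adm1, adm2).
  by exists (2 * c1 * c2); exact: adm3.
split; first by split; [exact: measurable_funM | exact/wL_norm_lt_pinftyP].
rewrite !wL_normE // -!EFinM lee_fin.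
have inf1_ge0 := lb_le_inf adm1 (@wL_admissible_lbound0 _ _ _ mu Phi1 u1 f1).
apply: ler_mul_inf => // [|c2 adm_c2]; first by rewrite mulr_ge0.
have c2_ge0 := wL_admissible_lbound0 adm_c2.
rewrite mulrAC; apply: ler_mul_inf => // [|c1 adm_c1]; first by rewrite mulr_ge0.
rewrite mulrAC; apply: ge_inf; last exact: adm3.
by exists 0; exact: wL_admissible_lbound0.
Qed.
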